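(* Let $m\ge0$ be an integer. Let $\varphi\in C^\infty(T\mathbb{S}^{n-1}\setminus\mathbb{S}^{n-1}_0)$ satisfy $$E_{m+1}E_m\cdots E_1\varphi=0$$ for all indices $1\le i_1,j_1,\dots,i_{m+1},j_{m+1}\le n$, where $$E_k=x_{i_k}\Xi_{j_k}-x_{j_k}\Xi_{i_k}+(m-k+1)\big(x_{i_k}\xi_{j_k}-x_{j_k}\xi_{i_k}\big)\quad(k=1,\dots,m+1)$$ (so $E_1$ is applied first and $E_{m+1}$ last). Define $\psi\in C^\infty(V_n)$ by $$\psi(x,\xi)=|\xi|^m\varphi\big(x,\xi/|\xi|\big).$$ Then, for all indices $1\le i_1,j_1,\dots,i_{m+1},j_{m+1}\le n$, $$\Big(x_{i_1}\frac{\partial}{\partial\xi^{j_1}}-x_{j_1}\frac{\partial}{\partial\xi^{i_1}}\Big)\cdots\Big(x_{i_{m+1}}\frac{\partial}{\partial\xi^{j_{m+1}}}-x_{j_{m+1}}\frac{\partial}{\partial\xi^{i_{m+1}}}\Big)\psi=0$$ on $V_n$.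
   Context: $T\mathbb{S}^{n-1}=\{(x,\xi):|\xi|=1,\ \langle x,\xi\rangle=0\}$ and $\mathbb{S}^{n-1}_0=\{(0,\xi):\xi\in\mathbb{S}^{n-1}\}\subset T\mathbb{S}^{n-1}$. Let $$V_n=\{(x,\xi)\in\mathbb{R}^n\times\mathbb{R}^n: x\ne0,\ \xi\ne0,\ \langle x,\xi\rangle=0\},$$ a smooth hypersurface of $(\mathbb{R}^n\setminus\{0\})^2$. The vector fields $x_i\partial/\partial\xi^j-x_j\partial/\partial\xi^i$ are tangent to $V_n$, hence act on $C^\infty(V_n)$. On $\mathbb{R}^n\times\mathbb{R}^n$ define (summation over $p$) $$\tilde\Xi_i=\partial/\partial\xi^i-x_i\xi^p\,\partial/\partial x^p-\xi_i\xi^p\,\partial/\partial\xi^p.$$ This field is tangent to $T\mathbb{S}^{n-1}$; $\Xi_i$ denotes its restriction to $T\mathbb{S}^{n-1}\setminus\mathbb{S}^{n-1}_0$. Here $x_i=x^i$ and $\xi_i=\xi^i$ act by multiplication. *)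

From HB Require Import structures.
From mathcomp Require Import all_boot all_order all_algebra.
From mathcomp Require Import all_classical all_reals all_analysis.
Set Implicit Arguments. Unset Strict Implicit. Unset Printing Implicit Defensive.
Import Order.TTheory GRing.Theory Num.Theory.
Import numFieldNormedType.Exports.
Local Open Scope classical_set_scope.
Local Open Scope ring_scope.

Section Defs.
Variables (R : realType) (n : nat).

Definition pt := ('rV[R]_n * 'rV[R]_n)%type.

Definition dot (x y : 'rV[R]_n) : R := \sum_(i < n) x 0 i * y 0 i.
Definition enorm (x : 'rV[R]_n) : R := Num.sqrt (dot x x).

Definition TS_punct : set pt :=
  [set p | enorm p.2 = 1 /\ dot p.1 p.2 = 0 /\ p.1 != 0].

Definition Vn : set pt :=
  [set p | p.1 != 0 /\ p.2 != 0 /\ dot p.1 p.2 = 0].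

Definition dx (j : 'I_n) (f : pt -> R) : pt -> R :=
  fun p => 'D_((delta_mx 0 j : 'rV[R]_n, 0 : 'rV[R]_n) : pt) f p.
Definition dxi (j : 'I_n) (f : pt -> R) : pt -> R :=
  fun p => 'D_((0 : 'rV[R]_n, delta_mx 0 j : 'rV[R]_n) : pt) f p.

Fixpoint iter_D (vs : seq pt) (f : pt -> R) : pt -> R :=
  match vs with
  | [::] => f
  | v :: vs' => fun p => 'D_v (iter_D vs' f) p
  end.
Definition smooth_on (U : set pt) (f : pt -> R) : Prop :=
  forall (vs : seq pt) (p : pt), U p -> differentiable (iter_D vs f) p.

Definition Xi (i : 'I_n) (f : pt -> R) : pt -> R :=
  fun p => dxi i f p
    - p.1 0 i * (\sum_(q < n) p.2 0 q * dx q f p)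
    - p.2 0 i * (\sum_(q < n) p.2 0 q * dxi q f p).

(* E_k (k 1-based, here k = k0.+1 with k0 : 'I_(m.+1)) *)
Definition Eop (m : nat) (ii jj : 'I_m.+1 -> 'I_n) (k0 : 'I_m.+1)
    (f : pt -> R) : pt -> R :=
  fun p => p.1 0 (ii k0) * Xi (jj k0) f p - p.1 0 (jj k0) * Xi (ii k0) f p
    + (m - k0)%:R * (p.1 0 (ii k0) * p.2 0 (jj k0)
                     - p.1 0 (jj k0) * p.2 0 (ii k0)) * f p.

(* E_N ... E_1 f  (E_1 applied first) *)
Fixpoint iterE (m : nat) (ii jj : 'I_m.+1 -> 'I_n) (N : nat) (f : pt -> R)
  : pt -> R :=
  match N with
  | 0 => f
  | N'.+1 => Eop ii jj (inord N') (iterE ii jj N' f)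
  end.

Definition Lop (m : nat) (ii jj : 'I_m.+1 -> 'I_n) (k0 : 'I_m.+1)
    (f : pt -> R) : pt -> R :=
  fun p => p.1 0 (ii k0) * dxi (jj k0) f p - p.1 0 (jj k0) * dxi (ii k0) f p.

(* L_{m+2-N} ... L_{m+1} f  (L_{m+1} applied first, L_1 last when N = m+1) *)
Fixpoint iterL (m : nat) (ii jj : 'I_m.+1 -> 'I_n) (N : nat) (f : pt -> R)
  : pt -> R :=
  match N with
  | 0 => f
  | N'.+1 => Lop ii jj (inord (m - N')) (iterL ii jj N' f)
  end.

Definition psi_of (m : nat) (phi : pt -> R) : pt -> R :=
  fun p => enorm p.2 ^+ m * phi (p.1, (enorm p.2)^-1 *: p.2).

End Defs.

From HB Require Import structures.
From mathcomp Require Import all_boot all_order all_algebra.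
From mathcomp Require Import all_classical all_reals all_analysis.
From mathcomp Require Import ring.
Set Implicit Arguments. Unset Strict Implicit. Unset Printing Implicit Defensive.
Import Order.TTheory GRing.Theory Num.Theory.
Import numFieldNormedType.Exports.
Local Open Scope classical_set_scope.
Local Open Scope ring_scope.

(* Put g_d(x, xi) = |xi|^d g(x, xi/|xi|), so that psi = phi_m.  Differentiating the
   normalisation xi |-> xi/|xi| shows that, wherever xi <> 0 and g is differentiable
   at (x, xi/|xi|),
     (x_a d/dxi^b - x_b d/dxi^a) g_d = |xi|^(d-1) (E^d_ab g)(x, xi/|xi|),
   where E^d_ab = x_a Xi_b - x_b Xi_a + d (x_a xi_b - x_b xi_a).  The right-hand side
   is again of the same shape, with a function that is smooth near the unit sphere
   bundle, and at the k-th step the weight d = m - k + 1 is exactly that of E_k.  So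
   the operators L_(m+1), ..., L_1 lower the degree from m to -1, and
     L_1 ... L_(m+1) psi = |xi|^(-1) (E_(m+1) ... E_1 phi)(x, xi/|xi|),
   which vanishes on V_n since (x, xi/|xi|) then lies in TS^(n-1) \ S^(n-1)_0.
   Only values of phi near TS^(n-1) \ S^(n-1)_0 matter, which is why smoothness on an
   open neighbourhood U suffices. *)

Lemma open_near (T : topologicalType) (U : set T) (p : T) :
  open U -> U p -> \forall q \near p, U q.
Proof. by move=> oU Up; apply: open_nbhs_nbhs. Qed.

Section Differentiability.
Context {R : realType} {V W : normedModType R}.
Implicit Types (p : V) (f g Df Dg : V -> W).

Lemma near_eq_differentiable (f g : V -> W) (a : V) :
  {near a, f =1 g} -> differentiable f a -> differentiable g a.
Proof.
move=> fg df.
have ga : g a = f a by rewrite (nbhs_singleton fg).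
have gf_o : (fun x => g x - f x) \o shift a =o_ (0 : V) id.
  apply/eqoP => e e0.
  have : \forall x \near (0 : V), f (x + a) = g (x + a).
    by rewrite (near_shift a) /=; apply: filterS fg => x /= fgx; rewrite sub0r subrK.
  by apply: filterS => x /= ->; rewrite subrr normr0 mulr_ge0 // ltW.
have g_loc : g \o shift a = cst (g a) + 'd f a +o_ (0 : V) id.
  have -> : g \o shift a = (f \o shift a) + ((fun x => g x - f x) \o shift a).
    by apply/funext => x; rewrite !fctE /= addrC subrK.
  by rewrite ga (diff_locally df) gf_o -addrA addo.
have dg : 'd g a = 'd f a :> (V -> W).
  by apply: diff_unique g_loc; exact: diff_continuous.
by apply/diff_locallyP; rewrite dg; split=> //; exact: diff_continuous.
Qed.

Definition has_diff (W' : normedModType R) (f : V -> W') (p : V) (Df : V -> W') :=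
  differentiable f p /\ forall v, 'D_v f p = Df v.

Lemma has_diff_linear (f : V -> W) p : linear f -> continuous f -> has_diff f p f.
Proof.
move=> flin fc.
pose fL : {linear V -> W} := HB.pack f (GRing.isLinear.Build R V W *:%R f flin).
have -> : f = fL by [].
have dfL : differentiable fL p by exact: linear_differentiable.
by split=> // v; rewrite deriveE // diff_lin.
Qed.

Lemma has_diff_sum k (F : 'I_k -> V -> W) p DF :
  (forall l, has_diff (F l) p (DF l)) ->
  has_diff (fun x => \sum_(l < k) F l x) p (fun v => \sum_(l < k) DF l v).
Proof.
move=> h.
have -> : (fun x => \sum_(l < k) F l x) = \sum_(l < k) F l by rewrite fct_sumE.
split.
  by apply: differentiable_sum => l; exact: (h l).1.
move=> v; rewrite derive_sum; last by move=> l; apply: diff_derivable; exact: (h l).1.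
by apply: eq_bigr => l _; rewrite (h l).2.
Qed.

Lemma has_diffZl (f Df : V -> R) (w : W) p : has_diff f p Df ->
  has_diff (fun x => f x *: w) p (fun v => Df v *: w).
Proof.
move=> [df Ef]; split; first exact: differentiableZl.
move=> v; rewrite deriveE; last exact: differentiableZl.
by rewrite diffZl // -deriveE // Ef.
Qed.

Lemma has_diff_comp (V' : normedModType R) (h : V -> V') (g : V' -> W) p Dh :
  has_diff h p Dh -> differentiable g (h p) ->
  has_diff (g \o h) p (fun v => 'D_(Dh v) g (h p)).
Proof.
move=> [dh Eh] dg; split; first exact: differentiable_comp.
move=> v; rewrite deriveE; last exact: differentiable_comp.
by rewrite diff_comp //= -(deriveE v dh) Eh -deriveE.
Qed.

Lemma has_diff_pair (V' : normedModType R) (f : V -> W) (g : V -> V') p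
    Df (Dg : V -> V') :
  has_diff f p Df -> has_diff g p Dg ->
  has_diff (fun x => (f x, g x)) p (fun v => (Df v, Dg v)).
Proof.
move=> [df Ef] [dg Eg]; split; first exact: differentiable_pair.
move=> v; have dfg := differentiable_pair df dg.
by rewrite deriveE // diff_pair // -(deriveE v df) -(deriveE v dg) Ef Eg.
Qed.

End Differentiability.

Section ScalarDifferentiability.
Context {R : realType} {V : normedModType R}.
Implicit Types (p : V) (f g Df Dg : V -> R).

Lemma has_diffM f g p Df Dg : has_diff f p Df -> has_diff g p Dg ->
  has_diff (fun x => f x * g x) p (fun v => f p * Dg v + g p * Df v).
Proof.
move=> [df Ef] [dg Eg]; split; first exact: differentiableM.
by move=> v; rewrite -Ef -Eg; apply: (@deriveM _ _ f g); exact: diff_derivable.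
Qed.

Lemma has_diffV f p Df : f p != 0 -> has_diff f p Df ->
  has_diff (fun x => (f x)^-1) p (fun v => - (f p) ^- 2 * Df v).
Proof.
move=> f0 [df Ef]; split; first exact: differentiableV.
by move=> v; rewrite -Ef; apply: (@deriveV _ _ f) => //; exact: diff_derivable.
Qed.

Lemma has_diffX f p Df d : has_diff f p Df ->
  has_diff (fun x => f x ^+ d) p (fun v => d%:R * f p ^+ d.-1 * Df v).
Proof.
move=> [df Ef]; rewrite -(exprfctE f d); split.
  by case: d => [|d]; [rewrite expr0; exact: differentiable_cst | exact: differentiableX].
by move=> v; rewrite -Ef; apply: (@deriveX _ _ f); exact: diff_derivable.
Qed.

Lemma has_diff_sqrt f p Df : 0 < f p -> has_diff f p Df ->
  has_diff (fun x => Num.sqrt (f x)) p (fun v => Df v / (2 * Num.sqrt (f p))).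
Proof.
move=> f0 [df Ef].
have ds : differentiable (@Num.sqrt R) (f p).
  by apply/derivable1_diffP; case: (is_derive1_sqrt f0).
split; first exact: (differentiable_comp df ds).
move=> v; rewrite deriveE; last exact: (differentiable_comp df ds).
rewrite diff_comp //= deriv1E; last exact/derivable1_diffP.
by rewrite derive1E derive_sqrt // -deriveE // Ef.
Qed.

End ScalarDifferentiability.

Lemma sum_pair (U V : nmodType) (I : Type) (r : seq I) (F : I -> U) (G : I -> V) :
  \sum_(i <- r) (F i, G i) = (\sum_(i <- r) F i, \sum_(i <- r) G i).
Proof. by elim/big_rec3: _ => // i a b c _ ->. Qed.

Lemma sum_scale_delta (R : ringType) n (c : 'I_n -> R) :
  \sum_(l < n) c l *: (delta_mx 0 l : 'rV[R]_n) = \row_l c l.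
Proof. by rewrite [RHS]row_sum_delta; apply: eq_bigr => l _; rewrite mxE. Qed.

Lemma sum_delta (R : ringType) n (F : 'I_n -> R) b :
  \sum_(l < n) (delta_mx 0 b : 'rV[R]_n) 0 l * F l = F b.
Proof.
rewrite (bigD1 b) //= mxE !eqxx mul1r big1 ?addr0 // => l lb.
by rewrite mxE (negbTE lb) mul0r.
Qed.

Section Normalization.
Variables (R : realType) (n : nat).
Local Notation pt := (pt R n).
Implicit Types (p q v : pt) (g : pt -> R).

Lemma coord1_continuous i : continuous (fun q : pt => q.1 0 i).
Proof.
move=> q; apply: (@continuous_comp _ _ _ fst (fun M : 'rV[R]_n => M 0 i)).
  exact: cvg_fst.
exact: coord_continuous.
Qed.

Lemma coord2_continuous i : continuous (fun q : pt => q.2 0 i).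
Proof.
move=> q; apply: (@continuous_comp _ _ _ snd (fun M : 'rV[R]_n => M 0 i)).
  exact: cvg_snd.
exact: coord_continuous.
Qed.

Lemma has_diff_fst p : has_diff (@fst _ _ : pt -> 'rV[R]_n) p fst.
Proof. by apply: has_diff_linear => // q; exact: cvg_fst. Qed.

Lemma has_diff_coord2 i p : has_diff (fun q : pt => q.2 0 i) p (fun v => v.2 0 i).
Proof.
by apply: has_diff_linear; [move=> a x y; rewrite !mxE | exact: coord2_continuous].
Qed.

Lemma dot_gt0 (x : 'rV[R]_n) : x != 0 -> 0 < dot x x.
Proof.
move=> x0; have [l xl0] : exists l, x 0 l != 0.
  apply/existsP; apply: contraNT x0 => /existsPn x_eq0.
  by apply/eqP/rowP => l; rewrite mxE; apply/eqP/negPn.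
rewrite /dot (bigD1 l) //= ltr_pwDl ?sumr_ge0 // => [|i _]; last by rewrite -expr2 sqr_ge0.
by rewrite -expr2 exprn_even_gt0.
Qed.

Lemma enorm_gt0 (x : 'rV[R]_n) : x != 0 -> 0 < enorm x.
Proof. by move=> x0; rewrite sqrtr_gt0 dot_gt0. Qed.

Lemma dotZr c (x y : 'rV[R]_n) : dot x (c *: y) = c * dot x y.
Proof. by rewrite /dot mulr_sumr; apply: eq_bigr => l _; rewrite mxE mulrCA. Qed.

Lemma dotZl c (x y : 'rV[R]_n) : dot (c *: x) y = c * dot x y.
Proof. by rewrite /dot mulr_sumr; apply: eq_bigr => l _; rewrite mxE mulrA. Qed.

Definition normalize p : pt := (p.1, (enorm p.2)^-1 *: p.2).

Lemma normalize_TS_punct p : Vn p -> TS_punct (normalize p).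
Proof.
move=> [x0 [xi0 x_xi]]; split; last by rewrite /= dotZr x_xi mulr0.
have xi_gt0 := enorm_gt0 xi0.
rewrite /enorm /= dotZl dotZr mulrA -expr2 -[dot p.2 p.2]sqr_sqrtr ?ltW ?dot_gt0 //.
by rewrite -exprMn mulVf ?gt_eqF // expr1n sqrtr1.
Qed.

Lemma has_diff_enorm p : p.2 != 0 ->
  has_diff (fun q : pt => enorm q.2) p (fun v => dot p.2 v.2 / enorm p.2).
Proof.
move=> xi0; have [d E] := @has_diff_sqrt _ _ (fun q : pt => dot q.2 q.2) p _ (dot_gt0 xi0)
  (has_diff_sum (fun l => has_diffM (has_diff_coord2 l p) (has_diff_coord2 l p))).
split=> // v; rewrite E big_split /= -/(dot p.2 v.2) -/(enorm p.2).
by field; rewrite gt_eqF // enorm_gt0.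
Qed.

Lemma has_diff_normalize p : p.2 != 0 -> has_diff normalize p
  (fun v => (v.1, (enorm p.2)^-1 *: v.2 - (dot p.2 v.2 / enorm p.2 ^+ 3) *: p.2)).
Proof.
move=> xi0; have N0 : enorm p.2 != 0 by rewrite gt_eqF // enorm_gt0.
pose c l (q : pt) := (enorm q.2)^-1 * q.2 0 l.
have -> : normalize = fun q => (q.1, \sum_(l < n) c l q *: delta_mx 0 l).
  apply/funext => q; congr pair.
  by rewrite sum_scale_delta; apply/rowP => k; rewrite !mxE.
have hc l : has_diff (c l) p (fun v => (enorm p.2)^-1 * v.2 0 l
    + p.2 0 l * (- (enorm p.2) ^- 2 * (dot p.2 v.2 / enorm p.2))).
  exact: has_diffM (has_diffV (f := fun q : pt => enorm q.2) N0 (has_diff_enorm xi0))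
    (has_diff_coord2 l p).
have [d E] := has_diff_pair (has_diff_fst p)
  (has_diff_sum (fun l => has_diffZl (delta_mx 0 l : 'rV[R]_n) (hc l))).
split=> // v; rewrite E sum_scale_delta; congr pair.
by apply/rowP => k; rewrite !mxE; field.
Qed.

Lemma derive_xi_expand g q (w : 'rV[R]_n) : differentiable g q ->
  'D_((0, w) : pt) g q = \sum_(l < n) w 0 l * dxi l g q.
Proof.
move=> dg; have -> : ((0, w) : pt) = \sum_(l < n) w 0 l *: ((0, delta_mx 0 l) : pt).
  rewrite (eq_bigr (fun l => (0, w 0 l *: delta_mx 0 l))) => [|l _]; last first.
    by apply/pair_equal_spec; rewrite /= scaler0.
  by rewrite sum_pair big1 // -row_sum_delta.
rewrite deriveE // linear_sum; apply: eq_bigr => l _.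
by rewrite linearZ /= -deriveE.
Qed.

Definition homog_ext (d : nat) g p := enorm p.2 ^+ d * g (normalize p).

End Normalization.

Section Operators.
Variables (R : realType) (n : nat).
Local Notation pt := (pt R n).
Implicit Types (p q : pt) (g : pt -> R).

Definition Lab (a b : 'I_n) g p := p.1 0 a * dxi b g p - p.1 0 b * dxi a g p.

Definition Eab (d : nat) (a b : 'I_n) g q :=
  q.1 0 a * Xi b g q - q.1 0 b * Xi a g q
  + d%:R * (q.1 0 a * q.2 0 b - q.1 0 b * q.2 0 a) * g q.

Lemma dxi_homog_ext d g p b : p.2 != 0 -> differentiable g (normalize p) ->
  dxi b (homog_ext d g) p = enorm p.2 ^+ d / enorm p.2 *
    (d%:R * (normalize p).2 0 b * g (normalize p) + dxi b g (normalize p)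
     - (normalize p).2 0 b
       * \sum_(l < n) (normalize p).2 0 l * dxi l g (normalize p)).
Proof.
move=> xi0 dg; have N0 : enorm p.2 != 0 by rewrite gt_eqF // enorm_gt0.
have [_ E] := has_diffM (has_diffX d (has_diff_enorm xi0))
  (has_diff_comp (has_diff_normalize xi0) dg).
rewrite [dxi b _ p]/dxi /homog_ext E /=.
have dot_delta : dot p.2 (delta_mx 0 b) = p.2 0 b.
  by rewrite /dot -(sum_delta (fun l => p.2 0 l)); apply: eq_bigr => l _; rewrite mulrC.
set e := enorm p.2; set c := dot p.2 _ / _; set q := normalize p.
have -> : ((0, e^-1 *: delta_mx 0 b - c *: p.2) : pt)
    = e^-1 *: ((0, delta_mx 0 b) : pt) - c *: ((0, p.2) : pt).
  by apply/pair_equal_spec; rewrite /= !scaler0 subr0.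
have radial : 'D_((0, p.2) : pt) g q = e * \sum_(l < n) q.2 0 l * dxi l g q.
  rewrite derive_xi_expand // mulr_sumr; apply: eq_bigr => l _.
  by rewrite mxE !mulrA mulfV // mul1r.
rewrite deriveE // linearB !linearZ /= -!deriveE // radial /c dot_delta.
have -> : q.2 0 b = e^-1 * p.2 0 b by rewrite mxE.
set S := \sum_(l < n) _ * dxi l g q.
rewrite -/(dxi b g q) -/S /GRing.scale /=.
by case: d {E} => [|d]; rewrite ?exprS /=; field.
Qed.

Lemma Lab_homog_ext d a b g p : p.2 != 0 -> differentiable g (normalize p) ->
  Lab a b (homog_ext d g) p = enorm p.2 ^+ d / enorm p.2 * Eab d a b g (normalize p).
Proof.
move=> xi0 dg; rewrite /Lab !dxi_homog_ext // /Eab /Xi /=.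
(* Abstracting the dx-sums first would make the matching unfold dx and dxi. *)
set Sxi := \sum_(l < n) _ * dxi l g _; set Sx := \sum_(l < n) _ * dx l g _.
ring.
Qed.

Lemma near_eq_Lab a b g g' p : {near p, g =1 g'} -> Lab a b g p = Lab a b g' p.
Proof. by move=> gg'; rewrite /Lab /dxi !(near_eq_derive _ gg'). Qed.

Lemma near_normalize (U : set pt) p : open U -> p.2 != 0 -> U (normalize p) ->
  \forall q \near p, q.2 != 0 /\ U (normalize q).
Proof.
move=> oU xi0 Up; have cont_normalize := differentiable_continuous (has_diff_normalize xi0).1.
near=> q; split; near: q; last exact: cont_normalize (open_near oU Up).
by apply: cvgr_neq0 xi0; exact: cvg_snd.
Unshelve. all: by end_near. Qed.

End Operators.

Section Smoothness.
Variables (R : realType) (n : nat).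
Local Notation pt := (pt R n).
Variable U : set pt.
Hypothesis oU : open U.
Implicit Types (f g : pt -> R) (vs : seq pt).

Lemma iter_D_rcons vs v f : iter_D (rcons vs v) f = iter_D vs ('D_v f).
Proof. by elim: vs => //= w vs ->. Qed.

Lemma iter_D_eq_on vs f g : (forall q, U q -> f q = g q) ->
  forall p, U p -> iter_D vs f p = iter_D vs g p.
Proof.
move=> fg; elim: vs => [|v vs IH] p Up /=; first exact: fg.
by apply: near_eq_derive; apply: filterS (open_near oU Up); exact: IH.
Qed.

Definition smooth_upto (k : nat) f := forall vs, (size vs <= k)%N ->
  forall p, U p -> differentiable (iter_D vs f) p.

Lemma smooth_onP f : smooth_on U f <-> forall k, smooth_upto k f.
Proof. by split=> [sf k vs _ | sf vs]; [exact: sf | exact: (sf (size vs))]. Qed.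

Lemma smooth_upto_eq_on k f g : (forall q, U q -> f q = g q) ->
  smooth_upto k f -> smooth_upto k g.
Proof.
move=> fg sf vs hvs p Up; apply: near_eq_differentiable (sf vs hvs p Up).
by apply: filterS (open_near oU Up) => q; exact: iter_D_eq_on.
Qed.

Lemma smooth_uptoD k f g : smooth_upto k f -> smooth_upto k g ->
  smooth_upto k (fun p => f p + g p).
Proof.
move=> sf sg.
have iter_DD vs : (size vs <= k)%N -> forall p, U p ->
    iter_D vs (fun p => f p + g p) p = iter_D vs f p + iter_D vs g p.
  elim: vs => [|v vs IH] hvs p Up //=.
  have hvs' : (size vs <= k)%N by apply: leq_trans hvs.
  rewrite (@near_eq_derive _ _ _ _ (fun q => iter_D vs f q + iter_D vs g q)).
    by apply: deriveD; apply: diff_derivable; [exact: sf | exact: sg].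
  by apply: filterS (open_near oU Up); exact: IH.
move=> vs hvs p Up.
apply: (@near_eq_differentiable _ _ _ (fun q => iter_D vs f q + iter_D vs g q)).
  by apply: filterS (open_near oU Up) => q Uq; rewrite iter_DD.
by apply: differentiableD; [exact: sf | exact: sg].
Qed.

Lemma smooth_on_derive v f : smooth_on U f -> smooth_on U ('D_v f).
Proof. by move=> sf vs p Up; rewrite -iter_D_rcons; exact: sf. Qed.

Lemma smooth_onD f g : smooth_on U f -> smooth_on U g ->
  smooth_on U (fun p => f p + g p).
Proof.
by move=> /smooth_onP sf /smooth_onP sg; apply/smooth_onP => k; exact: smooth_uptoD.
Qed.

Lemma smooth_onM f g : smooth_on U f -> smooth_on U g ->
  smooth_on U (fun p => f p * g p).
Proof.
move=> sf sg; apply/smooth_onP => k; elim: k f g sf sg => [|k IH] f g sf sg.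
  by case=> // _ p Up; apply: differentiableM; [exact: (sf [::]) | exact: (sg [::])].
move=> vs; rewrite leq_eqVlt ltnS => /predU1P[hvs|]; last exact: IH.
case/lastP: vs hvs => [//|ws v]; rewrite size_rcons => -[hws] p Up.
rewrite iter_D_rcons.
have leibniz q : U q -> f q * 'D_v g q + g q * 'D_v f q = 'D_v (fun x => f x * g x) q.
  move=> Uq; rewrite (deriveM (f := f) (g := g)) //; apply: diff_derivable.
    exact: (sf [::]).
  exact: (sg [::]).
have sk : smooth_upto k (fun q => f q * 'D_v g q + g q * 'D_v f q).
  by apply: smooth_uptoD; apply: IH => //; exact: smooth_on_derive.
by apply: (smooth_upto_eq_on leibniz sk) => //; rewrite hws.
Qed.

Lemma smooth_on_cst c : smooth_on U (fun _ => c).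
Proof.
move=> vs p _; have [c' ->] : exists c', iter_D vs (fun _ : pt => c) = fun _ => c'.
  elim: vs => [|v vs [c' IH]] /=; first by exists c.
  by exists 0; rewrite IH; apply/funext => q; exact: derive_cst.
exact: differentiable_cst.
Qed.

Lemma smooth_on_linear f : linear f -> continuous f -> smooth_on U f.
Proof.
move=> flin fc; case/lastP => [|vs v] p Up; first exact: (has_diff_linear p flin fc).1.
rewrite iter_D_rcons; have -> : 'D_v f = fun _ => f v.
  by apply/funext => q; exact: (has_diff_linear q flin fc).2.
exact: smooth_on_cst.
Qed.

Lemma smooth_on_coord1 i : smooth_on U (fun q : pt => q.1 0 i).
Proof.
by apply: smooth_on_linear; [move=> a x y; rewrite !mxE | exact: coord1_continuous].
Qed.

Lemma smooth_on_coord2 i : smooth_on U (fun q : pt => q.2 0 i).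
Proof.
by apply: smooth_on_linear; [move=> a x y; rewrite !mxE | exact: coord2_continuous].
Qed.

Lemma smooth_onB f g : smooth_on U f -> smooth_on U g ->
  smooth_on U (fun p => f p - g p).
Proof.
move=> sf sg; have -> : (fun p => f p - g p) = fun p => f p + (-1) * g p.
  by apply/funext => p; rewrite mulN1r.
by apply: smooth_onD => //; apply: smooth_onM => //; exact: smooth_on_cst.
Qed.

Lemma smooth_on_sum (I : Type) (r : seq I) (F : I -> pt -> R) :
  (forall l, smooth_on U (F l)) -> smooth_on U (fun p => \sum_(l <- r) F l p).
Proof.
move=> sF; elim: r => [|l r IH].
  by under eq_fun do rewrite big_nil; exact: smooth_on_cst.
by under eq_fun do rewrite big_cons; exact: smooth_onD.
Qed.

Lemma smooth_on_Xi i f : smooth_on U f -> smooth_on U (Xi i f).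
Proof.
move=> sf; apply: smooth_onB; first apply: smooth_onB; first exact: smooth_on_derive.
all: apply: smooth_onM; first (exact: smooth_on_coord1 || exact: smooth_on_coord2).
all: apply: smooth_on_sum => l; apply: smooth_onM; first exact: smooth_on_coord2.
all: exact: smooth_on_derive.
Qed.

Lemma smooth_on_Eab d a b f : smooth_on U f -> smooth_on U (Eab d a b f).
Proof.
move=> sf; apply: smooth_onD.
  by apply: smooth_onB; (apply: smooth_onM; [exact: smooth_on_coord1 | exact: smooth_on_Xi]).
apply: smooth_onM => //; apply: smooth_onM; first exact: smooth_on_cst.
by apply: smooth_onB; (apply: smooth_onM; [exact: smooth_on_coord1 | exact: smooth_on_coord2]).
Qed.

Lemma smooth_on_iterE m (ii jj : 'I_m.+1 -> 'I_n) k f :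
  smooth_on U f -> smooth_on U (iterE ii jj k f).
Proof. by move=> sf; elim: k => //= k IH; exact: smooth_on_Eab. Qed.

End Smoothness.

Section Iteration.
Variables (R : realType) (n m : nat) (U : set (pt R n)) (phi : pt R n -> R).
Hypotheses (oU : open U) (phi_smooth : smooth_on U phi).
Variables ii jj : 'I_m.+1 -> 'I_n.

(* The (k+1)-st operator L applied is L_(m+1-k); it is matched with E_(k+1),
   whose weight m - k is the degree of homogeneity reached after k steps. *)
Definition iterE_rev k :=
  iterE (fun k0 : 'I_m.+1 => ii (inord (m - k0))) (fun k0 => jj (inord (m - k0))) k phi.

Lemma differentiable_iterE_rev k q : U q -> differentiable (iterE_rev k) q.
Proof. exact: (smooth_on_iterE oU _ _ k phi_smooth [::]). Qed.

Lemma iterL_step k : (k <= m)%N ->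
  (forall q, q.2 != 0 -> U (normalize q) ->
     iterL ii jj k (psi_of m phi) q = homog_ext (m - k) (iterE_rev k) q) ->
  forall q, q.2 != 0 -> U (normalize q) ->
  iterL ii jj k.+1 (psi_of m phi) q
    = enorm q.2 ^+ (m - k) / enorm q.2 * iterE_rev k.+1 (normalize q).
Proof.
move=> km IH q xi0 Uq.
have -> : iterL ii jj k.+1 (psi_of m phi) q
    = Lab (ii (inord (m - k))) (jj (inord (m - k))) (iterL ii jj k (psi_of m phi)) q by [].
rewrite (@near_eq_Lab _ _ _ _ _ (homog_ext (m - k) (iterE_rev k))); last first.
  by apply: filterS (near_normalize oU xi0 Uq) => r [r0 Ur]; exact: IH.
rewrite Lab_homog_ext //; last exact: differentiable_iterE_rev.
by rewrite /iterE_rev /= /Eop inordK.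
Qed.

Lemma iterL_homog_ext k : (k <= m)%N -> forall q, q.2 != 0 -> U (normalize q) ->
  iterL ii jj k (psi_of m phi) q = homog_ext (m - k) (iterE_rev k) q.
Proof.
elim: k => [|k IH] km q xi0 Uq; first by rewrite subn0.
rewrite iterL_step ?(ltnW km) // => [|r r0 Ur]; last exact: IH (ltnW km) r r0 Ur.
have e0 : enorm q.2 != 0 by rewrite gt_eqF // enorm_gt0.
by rewrite /homog_ext -(subnSK km) exprS; field.
Qed.

End Iteration.

Theorem lemma4p2 (R : realType) (n m : nat) (U : set (pt R n))
    (phi : pt R n -> R) :
  open U -> TS_punct (R:=R) (n:=n) `<=` U -> smooth_on U phi ->
  (forall (ii jj : 'I_m.+1 -> 'I_n) (p : pt R n),
      TS_punct p -> iterE ii jj m.+1 phi p = 0) ->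
  forall (ii jj : 'I_m.+1 -> 'I_n) (p : pt R n),
    Vn p -> iterL ii jj m.+1 (psi_of m phi) p = 0.
Proof.
move=> oU TS_U phi_smooth hE ii jj p Vp.
have [_ [xi0 _]] := Vp.
have TSp := normalize_TS_punct Vp.
have Up : U (normalize p) := TS_U _ TSp.
rewrite (iterL_step oU phi_smooth (leqnn m)) //; first by rewrite /iterE_rev hE ?mulr0.
exact: iterL_homog_ext.
Qed.
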